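(* Let $\Gamma$ be the group generated by the super-Apollonian group $\mathcal A^S$, the $4\times4$ permutation matrices, and $\pm I$, and let $\tilde\Gamma=\langle\Gamma,D\rangle$ with $D=\frac12\begin{pmatrix}-1&1&1&1\\1&-1&1&1\\1&1&-1&1\\1&1&1&-1\end{pmatrix}$. Then $\tilde\Gamma=J_0\,O(3,1;\mathbb Z)\,J_0^{-1}$, where $J_0=\frac12\begin{pmatrix}1&1&1&1\\1&1&-1&-1\\1&-1&1&-1\\1&-1&-1&1\end{pmatrix}$.
   Context: Let $S_i$ ($i=1,\dots,4$) be the $4\times4$ integer matrix equal to the identity except that row $i$ has $-1$ in position $i$ and $2$ in the other three positions, and $S_i^\perp=S_i^T$; the super-Apollonian group is $\mathcal A^S=\langle S_1,\dots,S_4,S_1^\perp,\dots,S_4^\perp\rangle$. Let $Q_L=\mathrm{diag}(-1,1,1,1)$ and $O(3,1;\mathbb Z)=\{U\in M_4(\mathbb Z):U^TQ_LU=Q_L\}$. *)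

From HB Require Import structures.
From mathcomp Require Import all_boot all_order all_fingroup all_algebra.
Set Implicit Arguments. Unset Strict Implicit. Unset Printing Implicit Defensive.
Import Order.TTheory GRing.Theory Num.Theory.
Local Open Scope ring_scope.

Inductive genby (P : 'M[rat]_4 -> Prop) : 'M[rat]_4 -> Prop :=
  | genby_base M : P M -> genby P M
  | genby_one : genby P 1%:M
  | genby_mul M N : genby P M -> genby P N -> genby P (M *m N)
  | genby_inv M : genby P M -> genby P (invmx M).

Definition Smat (i : 'I_4) : 'M[rat]_4 :=
  \matrix_(r, c) (if r == i then (if c == i then -1 else 2) else (r == c)%:R).

(* generators of the super-Apollonian group: S_i and S_i^perp = S_i^T *)
Definition AS_gen (M : 'M[rat]_4) : Prop :=
  exists i : 'I_4, M = Smat i \/ M = (Smat i)^T.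

Definition superApollonian : 'M[rat]_4 -> Prop := genby AS_gen.

Definition Gamma : 'M[rat]_4 -> Prop :=
  genby (fun M => superApollonian M \/ (exists s : 'S_4, M = perm_mx s)
                  \/ M = 1%:M \/ M = - 1%:M).

Definition Dmat : 'M[rat]_4 :=
  \matrix_(r, c) (if r == c then - (1/2) else 1/2).

Definition GammaTilde : 'M[rat]_4 -> Prop :=
  genby (fun M => Gamma M \/ M = Dmat).

Definition J0 : 'M[rat]_4 :=
  (1/2) *: \matrix_(r, c)
    (nth 0 (nth [::] [:: [:: 1; 1; 1; 1]; [:: 1; 1; -1; -1];
                         [:: 1; -1; 1; -1]; [:: 1; -1; -1; 1]] r) c).

Definition QL : 'M[int]_4 :=
  \matrix_(r, c) (if r == c then (if r == 0 :> nat then -1 else 1) else 0).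

Definition O31Z (U : 'M[int]_4) : bool := U^T *m QL *m U == QL.

From HB Require Import structures.
From mathcomp Require Import all_boot all_order all_fingroup all_algebra.
From mathcomp Require Import zify ring.
Set Implicit Arguments. Unset Strict Implicit. Unset Printing Implicit Defensive.
Import Order.TTheory GRing.Theory Num.Theory.
Local Open Scope ring_scope.

(* Since J0 = J0^T = J0^-1, conjugation by J0 is a group isomorphism.  It sends
   every generator of Gamma~ (S_i, S_i^T, transpositions, -1, D) to an integer
   matrix preserving Q_L, which gives one inclusion.  Conversely the J0-conjugates
   of Gamma~ contain the coordinate sign changes, the transpositions of the
   coordinates 1, 2, 3, and the reflection R in v = (1,1,1,1), a vector of
   Lorentz norm 2.  An element U of O(3,1;Z) is reduced by the classical descent:
   if |U_00| >= 2, changing signs to make the first column nonnegative and then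
   applying R strictly decreases |U_00|; if |U_00| = 1, the first column is
   +-e_0 and the remaining columns are, one by one, signed unit vectors, which
   sign changes and transpositions move to e_1, e_2, e_3. *)

Definition ord4 : seq 'I_4 := [:: 0; 1; 2; 3].

Lemma ord4P (k : 'I_4) : [\/ k = 0, k = 1, k = 2 | k = 3].
Proof.
by case: k => [[|[|[|[|//]]]] p]; [constructor 1 | constructor 2 | constructor 3 | constructor 4];
  apply: val_inj.
Qed.

Lemma mem_ord4 (k : 'I_4) : k \in ord4.
Proof. by have [->|->|->|->] := ord4P k. Qed.

Lemma sum_ord4 (V : nmodType) (F : 'I_4 -> V) :
  \sum_(k < 4) F k = foldr (fun k s => F k + s) 0 ord4.
Proof.
rewrite !big_ord_recl big_ord0 /=.
by congr (F _ + (F _ + (F _ + (F _ + _)))); apply: val_inj.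
Qed.

Definition tab4 (R : Type) (f : 'I_4 -> 'I_4 -> R) : seq (seq R) :=
  [seq [seq f i j | j <- ord4] | i <- ord4].

Lemma nth_tab4 (R : Type) (x0 : R) (f : 'I_4 -> 'I_4 -> R) (i j : 'I_4) :
  nth x0 (nth [::] (tab4 f) (index i ord4)) (index j ord4) = f i j.
Proof.
rewrite (nth_map i) ?index_mem ?mem_ord4 // nth_index ?mem_ord4 //.
by rewrite (nth_map j) ?index_mem ?mem_ord4 // nth_index ?mem_ord4.
Qed.

(* Explicit 4x4 matrices are decided by [vm_compute] on the tables of their
   entry functions.  [mxf] has its own locking key, so the rewrite rules below
   only fire on matrices already in this form; [memo4] stores a computed table,
   so that call-by-value evaluation of a product never recomputes its factors. *)
Definition memo4 (R : Type) (x0 : R) (f : 'I_4 -> 'I_4 -> R) : 'I_4 -> 'I_4 -> R :=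
  let t := tab4 f in fun i j => nth x0 (nth [::] t (index i ord4)) (index j ord4).

Lemma memo4E (R : Type) (x0 : R) f i j : memo4 x0 f i j = f i j.
Proof. exact: nth_tab4. Qed.

Fact mxf_key : unit. Proof. by []. Qed.
Definition mxf (R : Type) (f : 'I_4 -> 'I_4 -> R) : 'M[R]_4 := \matrix[mxf_key]_(i, j) f i j.

Lemma eq_mxf (R : eqType) (f g : 'I_4 -> 'I_4 -> R) : tab4 f == tab4 g -> mxf f = mxf g.
Proof.
move=> /eqP fg; apply/matrixP => i j; rewrite !mxE.
by rewrite -(nth_tab4 (f i j) f) fg nth_tab4.
Qed.

Definition trf4 (R : Type) (f : 'I_4 -> 'I_4 -> R) i j : R := f j i.
Definition mapf4 (R S : Type) (h : R -> S) (f : 'I_4 -> 'I_4 -> R) i j : S := h (f i j).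
Definition mulf4 (R : pzRingType) (f g : 'I_4 -> 'I_4 -> R) : 'I_4 -> 'I_4 -> R :=
  memo4 0 (fun i j => foldr (fun k s => f i k * g k j + s) 0 ord4).

Lemma trmxf (R : Type) (f : 'I_4 -> 'I_4 -> R) : (mxf f)^T = mxf (trf4 f).
Proof. by apply/matrixP => i j; rewrite !mxE. Qed.

Lemma map_mxf (R S : Type) (h : R -> S) (f : 'I_4 -> 'I_4 -> R) :
  map_mx h (mxf f) = mxf (mapf4 h f).
Proof. by apply/matrixP => i j; rewrite !mxE. Qed.

Lemma oppmxf (R : zmodType) (f : 'I_4 -> 'I_4 -> R) : - mxf f = mxf (mapf4 -%R f).
Proof. by apply/matrixP => i j; rewrite !mxE. Qed.

Lemma mulmxf (R : pzRingType) (f g : 'I_4 -> 'I_4 -> R) : mxf f *m mxf g = mxf (mulf4 f g).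
Proof. by apply/matrixP => i j; rewrite !mxE /mulf4 memo4E sum_ord4 /= !mxE. Qed.

Definition Jconj (U : 'M[int]_4) : 'M[rat]_4 := J0 *m map_mx intr U *m J0.

(* An integral preimage of [M] under [Jconj], provided [J0 *m M *m J0] is integral. *)
Definition Jlift (M : 'M[rat]_4) : 'M[int]_4 := map_mx numq (J0 *m M *m J0).

Definition flip (k : 'I_4) : 'M[int]_4 := diag_mx (\row_(i < 4) (if i == k then -1 else 1 : int)).

(* The reflection [x |-> x - <x, v> v] for the Lorentz form, [v = (1,1,1,1)]. *)
Definition lorentz_refl : 'M[int]_4 := \matrix_(i, j) ((i == j)%:R - QL j j).

Lemma QL_diagE (i : 'I_4) : QL i i = if i == 0 then -1 else 1.
Proof. by rewrite mxE eqxx; have [->|->|->|->] := ord4P i. Qed.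

Lemma QL_offdiag (i j : 'I_4) : i != j -> QL i j = 0.
Proof. by rewrite mxE => /negbTE ->. Qed.

Lemma mx1_mxf (R : pzRingType) : 1%:M = mxf (fun i j => (i == j)%:R) :> 'M[R]_4.
Proof. by apply/matrixP => i j; rewrite !mxE. Qed.

Lemma tperm_mxf (R : pzRingType) (x y : 'I_4) :
  perm_mx (tperm x y) =
  mxf (fun i j => ((if i == x then y else if i == y then x else i) == j)%:R) :> 'M[R]_4.
Proof. by apply/matrixP => i j; rewrite !mxE permE. Qed.

Lemma J0_mxf : J0 = mxf (fun r c => 1 / 2 * (nth 0 (nth [::] [:: [:: 1; 1; 1; 1];
  [:: 1; 1; -1; -1]; [:: 1; -1; 1; -1]; [:: 1; -1; -1; 1]] r) c)).
Proof. by apply/matrixP => i j; rewrite !mxE. Qed.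

Lemma Dmat_mxf : Dmat = mxf (fun r c => if r == c then - (1 / 2) else 1 / 2).
Proof. by apply/matrixP => i j; rewrite !mxE. Qed.

Lemma Smat_mxf i :
  Smat i = mxf (fun r c => if r == i then (if c == i then -1 else 2) else (r == c)%:R).
Proof. by apply/matrixP => r c; rewrite !mxE. Qed.

Lemma QL_mxf :
  QL = mxf (fun r c => if r == c then (if r == 0 :> nat then -1 else 1) else 0).
Proof. by apply/matrixP => r c; rewrite !mxE. Qed.

Lemma flip_mxf k : flip k = mxf (fun i j => (if i == k then -1 else 1) *+ (i == j)).
Proof. by apply/matrixP => i j; rewrite !mxE. Qed.

Lemma lorentz_refl_mxf :
  lorentz_refl = mxf (fun i j => (i == j)%:R - (if j == 0 then -1 else 1)).
Proof. by apply/matrixP => i j; rewrite [LHS]mxE QL_diagE mxE. Qed.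

Ltac mx4_compute :=
  rewrite /O31Z /Jconj /Jlift ?(J0_mxf, Dmat_mxf, QL_mxf, Smat_mxf, tperm_mxf, mx1_mxf,
    flip_mxf, lorentz_refl_mxf);
  rewrite ?(mulmxf, map_mxf, trmxf, oppmxf);
  lazymatch goal with |- is_true _ => apply/eqP | _ => idtac end;
  apply: eq_mxf; vm_compute; reflexivity.

Lemma J0_sqr : J0 *m J0 = 1%:M.
Proof. by mx4_compute. Qed.

Lemma trmx_J0 : J0^T = J0.
Proof. by mx4_compute. Qed.

Lemma QL_sqr : QL *m QL = 1%:M.
Proof. by mx4_compute. Qed.

Lemma trmx_QL : QL^T = QL.
Proof. by mx4_compute. Qed.

Lemma invmx_left (R : comUnitRingType) n (A B : 'M[R]_n) : B *m A = 1%:M -> invmx A = B.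
Proof.
move=> BA; have [_ uA] := mulmx1_unit BA.
by rewrite -[invmx A]mul1mx -BA -mulmxA mulmxV // mulmx1.
Qed.

Lemma invmx_J0 : invmx J0 = J0.
Proof. exact: invmx_left J0_sqr. Qed.

Lemma JconjM U V : Jconj (U *m V) = Jconj U *m Jconj V.
Proof. by rewrite /Jconj map_mxM !mulmxA -(mulmxA _ J0 J0) J0_sqr mulmx1. Qed.

Lemma Jconj1 : Jconj 1%:M = 1%:M.
Proof. by rewrite /Jconj map_mx1 mulmx1 J0_sqr. Qed.

Lemma JconjN U : Jconj (- U) = - Jconj U.
Proof. by rewrite /Jconj map_mxN mulmxN mulNmx. Qed.

Lemma Jconj_tr U : (Jconj U)^T = Jconj U^T.
Proof. by rewrite /Jconj !trmx_mul trmx_J0 map_trmx mulmxA. Qed.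

Lemma Jconj_inj : injective Jconj.
Proof.
move=> U V eqUV; have: J0 *m Jconj U *m J0 = J0 *m Jconj V *m J0 by rewrite eqUV.
rewrite /Jconj !mulmxA J0_sqr !mul1mx -!mulmxA J0_sqr !mulmx1 => /matrixP eq_map.
by apply/matrixP => i j; apply: (@intr_inj rat); have := eq_map i j; rewrite !mxE.
Qed.

Lemma O31Z1 : O31Z 1%:M.
Proof. by rewrite /O31Z trmx1 mul1mx mulmx1. Qed.

Lemma O31ZM U V : O31Z U -> O31Z V -> O31Z (U *m V).
Proof.
rewrite /O31Z trmx_mul => /eqP hU /eqP hV.
by rewrite -!mulmxA (mulmxA U^T) (mulmxA (U^T *m QL)) hU mulmxA hV.
Qed.

Lemma O31ZN U : O31Z U -> O31Z (- U).
Proof.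
rewrite /O31Z (_ : (- U)^T = - U^T); last by apply/matrixP => i j; rewrite !mxE.
by rewrite !mulNmx mulmxN opprK.
Qed.

Lemma O31Z_QL : O31Z QL.
Proof. by rewrite /O31Z trmx_QL QL_sqr mul1mx. Qed.

Lemma O31Z_tr U : O31Z U -> O31Z U^T.
Proof.
rewrite /O31Z trmxK => /eqP hU.
have /mulmx1C UV : QL *m (U^T *m QL) *m U = 1%:M by rewrite -!mulmxA (mulmxA U^T) hU QL_sqr.
apply/eqP; rewrite -[LHS]mulmx1 -QL_sqr -!mulmxA (mulmxA U^T QL QL) (mulmxA QL) (mulmxA U).
by rewrite UV mul1mx.
Qed.

Lemma Jconj_inv U : O31Z U -> invmx (Jconj U) = Jconj (QL *m U^T *m QL).
Proof.
rewrite /O31Z => /eqP hU; apply: invmx_left.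
by rewrite -JconjM -!mulmxA (mulmxA U^T) hU QL_sqr Jconj1.
Qed.

Lemma genby_min (P Q : 'M[rat]_4 -> Prop) :
  Q 1%:M -> (forall M N, Q M -> Q N -> Q (M *m N)) -> (forall M, Q M -> Q (invmx M)) ->
  (forall M, P M -> Q M) -> forall M, genby P M -> Q M.
Proof.
move=> Q1 QM QV PQ M.
by elim=> [{}M /PQ | | {}M N _ QM' _ QN' | {}M _ /QV] //; apply: QM.
Qed.

Definition JO31Z (M : 'M[rat]_4) : Prop := exists U, O31Z U /\ M = Jconj U.

Lemma JO31Z1 : JO31Z 1%:M.
Proof. by exists 1%:M; rewrite Jconj1 O31Z1. Qed.

Lemma JO31ZM M N : JO31Z M -> JO31Z N -> JO31Z (M *m N).
Proof. by move=> [U [hU ->]] [V [hV ->]]; exists (U *m V); rewrite JconjM O31ZM. Qed.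

Lemma JO31ZV M : JO31Z M -> JO31Z (invmx M).
Proof.
move=> [U [hU ->]]; exists (QL *m U^T *m QL).
by rewrite Jconj_inv // !O31ZM ?O31Z_QL ?O31Z_tr.
Qed.

Lemma JO31ZN M : JO31Z M -> JO31Z (- M).
Proof. by move=> [U [hU ->]]; exists (- U); rewrite JconjN O31ZN. Qed.

Lemma JO31Z_tr M : JO31Z M -> JO31Z M^T.
Proof. by move=> [U [hU ->]]; exists U^T; rewrite Jconj_tr O31Z_tr. Qed.

Lemma JO31Z_Jlift M : Jconj (Jlift M) = M -> O31Z (Jlift M) -> JO31Z M.
Proof. by exists (Jlift M). Qed.

Lemma JO31Z_Smat i : JO31Z (Smat i).
Proof. by apply: JO31Z_Jlift; have [->|->|->|->] := ord4P i; mx4_compute. Qed.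

Lemma JO31Z_D : JO31Z Dmat.
Proof. by apply: JO31Z_Jlift; mx4_compute. Qed.

Lemma JO31Z_tperm (x y : 'I_4) : JO31Z (perm_mx (tperm x y)).
Proof.
by apply: JO31Z_Jlift; have [->|->|->|->] := ord4P x; have [->|->|->|->] := ord4P y;
  mx4_compute.
Qed.

Lemma JO31Z_perm (s : 'S_4) : JO31Z (perm_mx s).
Proof.
have [ts -> _] := prod_tpermP s; elim: ts => [|t ts IHts].
  by rewrite big_nil perm_mx1; apply: JO31Z1.
by rewrite big_cons perm_mxM; apply: JO31ZM (JO31Z_tperm _ _) IHts.
Qed.

Lemma GammaTilde_JO31Z M : GammaTilde M -> JO31Z M.
Proof.
apply: genby_min JO31Z1 JO31ZM JO31ZV _ M => {}M [|->]; last exact: JO31Z_D.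
apply: genby_min JO31Z1 JO31ZM JO31ZV _ M => {}M [|[[s ->]|[->|->]]].
- apply: genby_min JO31Z1 JO31ZM JO31ZV _ M => {}M [i [->|->]].
    exact: JO31Z_Smat.
  exact/JO31Z_tr/JO31Z_Smat.
- exact: JO31Z_perm.
- exact: JO31Z1.
- exact/JO31ZN/JO31Z1.
Qed.

Lemma GammaTildeM M N : GammaTilde M -> GammaTilde N -> GammaTilde (M *m N).
Proof. exact: genby_mul. Qed.

Lemma GammaTilde_D : GammaTilde Dmat.
Proof. by apply: genby_base; right. Qed.

Lemma GammaTilde_Gamma M : Gamma M -> GammaTilde M.
Proof. by move=> GM; apply: genby_base; left. Qed.

Lemma GammaTilde_Smat i : GammaTilde (Smat i).
Proof. by apply/GammaTilde_Gamma/genby_base; left; apply: genby_base; exists i; left. Qed.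

Lemma GammaTilde_perm s : GammaTilde (perm_mx s).
Proof. by apply/GammaTilde_Gamma/genby_base; right; left; exists s. Qed.

Lemma GammaTilde_N1 : GammaTilde (- 1%:M).
Proof. by apply/GammaTilde_Gamma/genby_base; right; right; right. Qed.

Definition in_GammaTilde (U : 'M[int]_4) : Prop := GammaTilde (Jconj U).

Lemma in_GammaTilde1 : in_GammaTilde 1%:M.
Proof. by rewrite /in_GammaTilde Jconj1; apply: genby_one. Qed.

Lemma in_GammaTildeM U V : in_GammaTilde U -> in_GammaTilde V -> in_GammaTilde (U *m V).
Proof. by rewrite /in_GammaTilde JconjM; apply: GammaTildeM. Qed.

Lemma in_GammaTilde_O31Z U : in_GammaTilde U -> O31Z U.
Proof. by move=> /GammaTilde_JO31Z [V [hV /Jconj_inj ->]]. Qed.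

Lemma flipE k (U : 'M[int]_4) i j : (flip k *m U) i j = if i == k then - U i j else U i j.
Proof. by rewrite mul_diag_mx !mxE; case: eqP; rewrite ?mulN1r ?mul1r. Qed.

Lemma flip_sqr k : flip k *m flip k = 1%:M.
Proof.
by apply/matrixP => i j; rewrite flipE /flip !mxE; case: eqP => _; rewrite ?mulNrn ?opprK.
Qed.

Lemma in_GammaTilde_flip k : in_GammaTilde (flip k).
Proof.
rewrite /in_GammaTilde; have [->|->|->|->] := ord4P k.
- have -> : Jconj (flip 0) = - 1%:M *m Dmat by mx4_compute.
  exact: GammaTildeM GammaTilde_N1 GammaTilde_D.
- have -> : Jconj (flip 1) = Dmat *m perm_mx (tperm 0 1) *m perm_mx (tperm 2 3)
    by mx4_compute.
  exact: GammaTildeM (GammaTildeM GammaTilde_D (GammaTilde_perm _)) (GammaTilde_perm _).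
- have -> : Jconj (flip 2) = Dmat *m perm_mx (tperm 0 2) *m perm_mx (tperm 1 3)
    by mx4_compute.
  exact: GammaTildeM (GammaTildeM GammaTilde_D (GammaTilde_perm _)) (GammaTilde_perm _).
- have -> : Jconj (flip 3) = Dmat *m perm_mx (tperm 0 3) *m perm_mx (tperm 1 2)
    by mx4_compute.
  exact: GammaTildeM (GammaTildeM GammaTilde_D (GammaTilde_perm _)) (GammaTilde_perm _).
Qed.

Lemma swapE (x y : 'I_4) (U : 'M[int]_4) i j :
  (perm_mx (tperm x y) *m U) i j = U (tperm x y i) j.
Proof. by rewrite -row_permE mxE. Qed.

Lemma swap_sqr (x y : 'I_4) : perm_mx (tperm x y) *m perm_mx (tperm x y) = 1%:M :> 'M[int]_4.
Proof. by rewrite -perm_mxM tperm2 perm_mx1. Qed.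

Lemma in_GammaTilde_swap (x y : 'I_4) :
  x != 0 -> y != 0 -> in_GammaTilde (perm_mx (tperm x y)).
Proof.
move=> x0 y0; rewrite /in_GammaTilde.
suff -> : Jconj (perm_mx (tperm x y)) = perm_mx (tperm x y) by apply: GammaTilde_perm.
by move: x0 y0; have [->|->|->|->] := ord4P x; have [->|->|->|->] := ord4P y => // _ _;
  mx4_compute.
Qed.

Lemma lorentz_refl_sqr : lorentz_refl *m lorentz_refl = 1%:M.
Proof. by mx4_compute. Qed.

Lemma in_GammaTilde_lorentz_refl : in_GammaTilde lorentz_refl.
Proof.
rewrite /in_GammaTilde (_ : Jconj _ = Smat 0); first exact: GammaTilde_Smat.
by mx4_compute.
Qed.

Definition reduces (U V : 'M[int]_4) : Prop := O31Z V /\ (in_GammaTilde V -> in_GammaTilde U).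

Lemma reduces_trans U V W : reduces U V -> reduces V W -> reduces U W.
Proof. by move=> [_ VU] [hW WV]; split=> // /WV. Qed.

Lemma reduces_involution W U :
  in_GammaTilde W -> W *m W = 1%:M -> O31Z U -> reduces U (W *m U).
Proof.
move=> GW WW hU; split; first exact: O31ZM (in_GammaTilde_O31Z GW) hU.
by move=> GWU; rewrite -[U]mul1mx -WW -mulmxA; apply: in_GammaTildeM.
Qed.

Lemma reduces_flip k U : O31Z U -> reduces U (flip k *m U).
Proof. exact: reduces_involution (in_GammaTilde_flip k) (flip_sqr k). Qed.

Lemma reduces_swap (x y : 'I_4) U :
  x != 0 -> y != 0 -> O31Z U -> reduces U (perm_mx (tperm x y) *m U).
Proof. by move=> x0 y0; apply: reduces_involution (in_GammaTilde_swap x0 y0) (swap_sqr x y). Qed.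

Lemma reduces_lorentz_refl U : O31Z U -> reduces U (lorentz_refl *m U).
Proof. exact: reduces_involution in_GammaTilde_lorentz_refl lorentz_refl_sqr. Qed.

Lemma O31Z_form U : O31Z U -> forall i j, \sum_l QL l l * (U l i * U l j) = QL i j.
Proof.
move=> /eqP hU i j; rewrite -{2}hU [RHS]mxE; apply: eq_bigr => l _.
rewrite [in RHS]mxE (bigD1 l) //= big1 => [|m ml]; last by rewrite [QL m l]QL_offdiag ?mulr0.
by rewrite addr0 [U^T i l]mxE mulrCA mulrA.
Qed.

Lemma sum_sqr_eq1 (I : finType) (x : I -> int) :
  \sum_i x i ^+ 2 = 1 -> exists r, x r ^+ 2 = 1 /\ forall i, i != r -> x i = 0.
Proof.
move=> sum1; have [r xr | x0] := pickP (fun i => x i != 0); last first.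
  by move: sum1; rewrite big1 // => i _; move/negbFE/eqP: (x0 i) => ->; rewrite expr0n.
have rest_ge0 : 0 <= \sum_(i | i != r) x i ^+ 2 by rewrite sumr_ge0 // => i _; rewrite sqr_ge0.
have xr_gt0 : 0 < x r ^+ 2 by rewrite lt0r sqrf_eq0 xr sqr_ge0.
move: sum1 rest_ge0 xr_gt0; rewrite (bigD1 r) //=.
set rest := \sum_(i | i != r) _; set xr2 := x r ^+ 2 => sum1 rest_ge0 xr_gt0.
have rest0 : rest = 0 by lia.
exists r; split; first by lia.
move=> i ir; apply/eqP; rewrite -sqrf_eq0; apply/eqP.
by apply: (psumr_eq0P _ rest0) => // j _; rewrite sqr_ge0.
Qed.

Definition fixes_cols (k : nat) (U : 'M[int]_4) : Prop :=
  forall j : 'I_4, (j < k)%N -> forall i, U i j = (i == j)%:R.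

Lemma fixes_colsS (k : 'I_4) U :
  fixes_cols k U -> (forall i, U i k = (i == k)%:R) -> fixes_cols k.+1 U.
Proof. by move=> fixU colU j; rewrite ltnS leq_eqVlt => /orP [/eqP/val_inj -> // | /fixU]. Qed.

Lemma fixes_cols4 U : fixes_cols 4 U -> U = 1%:M.
Proof. by move=> fixU; apply/matrixP => i j; rewrite [RHS]mxE; apply: fixU. Qed.

Lemma col_pivot (k : 'I_4) U : (0 < k)%N -> O31Z U -> fixes_cols k U ->
  exists2 r : 'I_4, (k <= r)%N & U r k ^+ 2 = 1 /\ forall i, i != r -> U i k = 0.
Proof.
move=> k0 hU fixU; have k_neq0 : k != 0 by apply: contraTneq k0 => ->.
have orth (j : 'I_4) : (j < k)%N -> U j k = 0.
  move=> jk; have := O31Z_form hU j k.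
  rewrite (bigD1 j) //= big1 => [|l lj]; last by rewrite fixU // (negbTE lj) mul0r mulr0.
  have jk' : j != k by rewrite -val_eqE ltn_eqF.
  rewrite fixU // eqxx mul1r addr0 (QL_offdiag jk') QL_diagE.
  by case: eqP => _ /eqP; rewrite ?mulN1r ?oppr_eq0 ?mul1r => /eqP.
have : \sum_l U l k ^+ 2 = 1.
  have := O31Z_form hU k k; rewrite QL_diagE (negbTE k_neq0) => <-.
  apply: eq_bigr => l _; rewrite QL_diagE expr2.
  by case: eqP => [-> | _]; rewrite ?(orth 0 k0) ?mul1r ?mulr0.
move=> /sum_sqr_eq1 [r [Ur1 Ur0]]; exists r => //.
by rewrite leqNgt; apply/negP => /orth Urk; move: Ur1; rewrite Urk expr0n.
Qed.

Lemma pivot_sign (k r : 'I_4) U : (k <= r)%N -> O31Z U -> fixes_cols k U ->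
  U r k ^+ 2 = 1 -> (forall i, i != r -> U i k = 0) ->
  exists V, [/\ reduces U V, fixes_cols k V & forall i, V i k = (i == r)%:R].
Proof.
move=> kr hU fixU /eqP; rewrite sqrf_eq1 => /orP[] /eqP Urk Ur0.
  by exists U; split=> // i; case: eqVneq => [-> | /Ur0].
exists (flip r *m U); split; first exact: reduces_flip.
  move=> j jk i; rewrite flipE fixU //; case: eqVneq => // ->.
  by rewrite (_ : r == j = false) ?oppr0 // -val_eqE gtn_eqF // (leq_trans jk kr).
by move=> i; rewrite flipE; case: eqVneq => [-> | /Ur0 ->]; rewrite ?Urk ?opprK ?oppr0.
Qed.

Lemma fixes_col0 U : O31Z U -> U 0 0 ^+ 2 = 1 -> exists V, reduces U V /\ fixes_cols 1 V.
Proof.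
move=> hU U00.
have Ui0 i : i != 0 -> U i 0 = 0.
  have := O31Z_form hU 0 0; rewrite (bigD1 0) //= QL_diagE eqxx mulN1r -expr2 U00.
  move=> /(canRL (addKr _)); rewrite addNr => sum0 i0; apply/eqP; rewrite -sqrf_eq0 expr2.
  apply/eqP; rewrite -[LHS]mul1r -[1 in LHS](_ : QL i i = 1); last by rewrite QL_diagE (negbTE i0).
  apply: (psumr_eq0P _ sum0) => // j j0; rewrite QL_diagE (negbTE j0) mul1r -expr2 sqr_ge0 //.
have fix0 : fixes_cols 0 U by [].
have [V [UV fixV colV]] := pivot_sign (k := 0) (r := 0) isT hU fix0 U00 Ui0.
by exists V; split=> //; apply: (fixes_colsS (k := 0)).
Qed.

Lemma fixes_cols_next (k : 'I_4) U : (0 < k)%N -> O31Z U -> fixes_cols k U ->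
  exists V, reduces U V /\ fixes_cols k.+1 V.
Proof.
move=> k0 hU fixU; have [r kr [Ur1 Ur0]] := col_pivot k0 hU fixU.
have [V [UV fixV colV]] := pivot_sign kr hU fixU Ur1 Ur0.
have k_neq0 : k != 0 by apply: contraTneq k0 => ->.
have r_neq0 : r != 0 by apply: contraTneq (leq_trans k0 kr) => ->.
exists (perm_mx (tperm r k) *m V); split; first exact: reduces_trans UV (reduces_swap _ _ UV.1).
apply: fixes_colsS => [j jk | ] i; rewrite swapE.
  have [rj kj] : r != j /\ k != j by rewrite -!val_eqE !gtn_eqF // (leq_trans jk kr).
  by rewrite fixV // -[X in _ == X](tpermD rj kj) (inj_eq perm_inj).
by rewrite colV -[X in _ == X](tpermR r k) (inj_eq perm_inj).
Qed.

Lemma unit_corner_in_GammaTilde U : O31Z U -> U 0 0 ^+ 2 = 1 -> in_GammaTilde U.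
Proof.
move=> hU U00.
have [V1 [UV1 fix1]] := fixes_col0 hU U00.
have [V2 [V12 fix2]] := fixes_cols_next (k := 1) isT UV1.1 fix1.
have [V3 [V23 fix3]] := fixes_cols_next (k := 2) isT V12.1 fix2.
have [V4 [V34 fix4]] := fixes_cols_next (k := 3) isT V23.1 fix3.
have [_ V4U] := reduces_trans UV1 (reduces_trans V12 (reduces_trans V23 V34)).
by apply: V4U; rewrite (fixes_cols4 fix4); apply: in_GammaTilde1.
Qed.

Lemma nonneg_col0 U : O31Z U -> exists V, reduces U V /\ forall i, V i 0 = `|U i 0|.
Proof.
move=> hU; suff /(_ (enum 'I_4)) [V [UV VU]] : forall s : seq 'I_4,
    exists V, reduces U V /\ forall i, V i 0 = if i \in s then `|U i 0| else U i 0.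
  by exists V; split=> // i; rewrite VU mem_enum.
elim=> [|k s [V [UV VU]]]; first by exists U.
have Vk : `|V k 0| = `|U k 0| by rewrite VU; case: ifP; rewrite ?normr_id.
have [Vneg | Vpos] := ltrP (V k 0) 0.
  exists (flip k *m V); split; first exact: reduces_trans UV (reduces_flip _ UV.1).
  move=> i; rewrite flipE in_cons; case: eqVneq => [-> | _] /=; last exact: VU.
  by rewrite -Vk ltr0_norm.
exists V; split=> // i; rewrite in_cons; case: eqVneq => [-> | _] /=; last exact: VU.
by rewrite -Vk ger0_norm.
Qed.

Lemma lorentz_refl00 (U : 'M[int]_4) :
  (lorentz_refl *m U) 0 0 = U 0 0 *+ 2 - (U 1 0 + U 2 0 + U 3 0).
Proof. by rewrite !mxE sum_ord4 /= !mxE /=; ring. Qed.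

Lemma O31Z_col0 U : O31Z U -> - U 0 0 ^+ 2 + U 1 0 ^+ 2 + U 2 0 ^+ 2 + U 3 0 ^+ 2 = -1.
Proof. by move=> /O31Z_form/(_ 0 0); rewrite sum_ord4 /= !mxE /= => <-; ring. Qed.

(* If [a >= b + c + d], then [b^2 + c^2 + d^2 = a^2 - 1] forces the even number
   [2 (b c + b d + c d)] to be 0, i.e. [a^2 - (b + c + d)^2 = 1], impossible for
   [a >= 2]. *)
Lemma lorentz_refl_descent (a b c d : int) : 0 <= b -> 0 <= c -> 0 <= d -> 2 <= a ->
  - a ^+ 2 + b ^+ 2 + c ^+ 2 + d ^+ 2 = -1 -> `|a *+ 2 - (b + c + d)| < a.
Proof.
rewrite !expr2 ltr_norml mulr2n => b0 c0 d0 a2 eq_norm.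
have [ba ca da] : [/\ b < a, c < a & d < a] by split; nia.
have a_lt_sum : a < b + c + d.
  rewrite ltNge; apply/negP => sum_le_a.
  have cross0 : b * c + b * d + c * d = 0 by nia.
  have : (a - (b + c + d)) * (a + (b + c + d)) = 1 by nia.
  nia.
apply/andP; split; lia.
Qed.

Lemma O31Z_in_GammaTilde U : O31Z U -> in_GammaTilde U.
Proof.
have [n] := ubnP (absz (U 0 0)); elim: n U => // n IH U; rewrite ltnS => ltUn hU.
have [a2 | a_lt2] := lerP 2 `|U 0 0|; last first.
  apply: unit_corner_in_GammaTilde => //; move: a_lt2 (O31Z_col0 hU).
  by rewrite ltr_norml !expr2 => /andP [? ?] ?; nia.
have [V [UV VU]] := nonneg_col0 hU.
have VR := reduces_lorentz_refl UV.1.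
have [_ RU] := reduces_trans UV VR; apply: RU; apply: IH VR.1; apply: leq_trans ltUn.
have := O31Z_col0 UV.1; rewrite lorentz_refl00 !VU.
move=> /(lorentz_refl_descent (normr_ge0 _) (normr_ge0 _) (normr_ge0 _) a2).
by rewrite -ltz_nat !abszE.
Qed.

Theorem lemma7p5 (M : 'M[rat]_4) :
  GammaTilde M <->
  exists U : 'M[int]_4, O31Z U /\ M = J0 *m map_mx intr U *m invmx J0.
Proof.
rewrite invmx_J0; split; first exact: GammaTilde_JO31Z.
by move=> [U [hU ->]]; apply: O31Z_in_GammaTilde.
Qed.
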